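(* For every integer $g \ge 0$, let $n'_g$ denote the number of gapsets of genus $g$ and depth at most $3$ (equivalently, the number of numerical semigroups $S$ of genus $g$ whose conductor $c$ and multiplicity $m$ satisfy $c \le 3m$). Then for all $g \ge 3$, $$n'_{g-1}+n'_{g-2} \,\le\, n'_{g} \,\le\, n'_{g-1}+n'_{g-2}+n'_{g-3}.$$
   Context: A gapset is a finite set $G \subset \mathbb{N}_+=\{1,2,3,\dots\}$ such that for all $z \in G$, whenever $z=x+y$ with $x,y\in\mathbb{N}_+$, we have $x\in G$ or $y\in G$; equivalently $G=\mathbb{N}\setminus S$ for a numerical semigroup $S$. The multiplicity of $G$ is the least $m\ge 1$ with $m\notin G$; its Frobenius number is $f=\max G$ (and $f=-1$ if $G=\emptyset$); its conductor is $c=f+1$; its genus is $|G|$; its depth is $q=\lceil c/m\rceil$. *)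

From mathcomp Require Import all_boot.
Set Implicit Arguments. Unset Strict Implicit. Unset Printing Implicit Defensive.

(* Finite subsets of N are represented by duplicate-free lists of nats;
   two such lists represent the same set iff they are permutations of each
   other, so we count gapsets as finite sets via [perm_eq]-classes below. *)

Definition is_gapset (G : seq nat) : Prop :=
  uniq G /\
  (forall z, z \in G -> 0 < z) /\
  (forall x y, 0 < x -> 0 < y -> x + y \in G -> (x \in G) \/ (y \in G)).

(* multiplicity: least m >= 1 with m \notin G (G is finite, so m <= max G + 1) *)
Definition multiplicity (G : seq nat) : nat :=
  (find (fun m => m \notin G) (iota 1 (\max_(z <- G) z).+1)).+1.

(* Frobenius number max G (-1 if G empty), conductor c = f + 1 *)
Definition conductor (G : seq nat) : nat :=
  if G is [::] then 0 else (\max_(z <- G) z).+1.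

Definition genus (G : seq nat) : nat := size G.

Definition depth (G : seq nat) : nat :=
  let c := conductor G in let m := multiplicity G in
  (c %/ m) + (c %% m != 0).

Definition enumerates_depth3 (g : nat) (s : seq (seq nat)) : Prop :=
  (forall G, G \in s -> is_gapset G /\ genus G = g /\ depth G <= 3) /\
  (forall G, is_gapset G -> genus G = g -> depth G <= 3 ->
     exists2 H, H \in s & perm_eq G H) /\
  (forall i j, i < size s -> j < size s ->
     perm_eq (nth [::] s i) (nth [::] s j) -> i = j).

From mathcomp Require Import all_boot zify.
From Stdlib Require Import Classical.
Set Implicit Arguments. Unset Strict Implicit. Unset Printing Implicit Defensive.

(* A gapset G of depth at most 3 and multiplicity m is determined by m and the
   sets A = {a < m | m + a \in G} and B = {b < m | 2m + b \in G}: it is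
   {1, ..., m-1} u (m + A) u (2m + B), of genus m - 1 + |A| + |B|, and such a
   set is a gapset exactly when B is contained in A and every splitting a + b
   of an element of B has a summand in A.
   Raising m to m + 1 and adding m to A or not preserves this condition and
   raises the genus by 1 or 2; both maps are injective, with disjoint images,
   which gives the lower bound.  Conversely, lowering m to m - 1 and dropping
   m - 1 from A and B gives a gapset of genus g - 1, g - 2 or g - 3 according
   as m - 1 lies in neither set, in A only, or in both (m - 1 in B forces
   m - 1 in A); G is recovered from its image and its genus, which gives the
   upper bound. *)

Lemma multiplicity_spec G :
  [/\ 0 < multiplicity G, multiplicity G \notin G &
      forall x, 0 < x < multiplicity G -> x \in G].
Proof.
rewrite /multiplicity; set M := \max_(z <- G) z; set p := fun m => m \notin G.
have has_p : has p (iota 1 M.+1).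
  apply/hasP; exists M.+1; first by rewrite mem_iota; lia.
  by apply/negP => /(@leq_bigmax_seq _ G xpredT id)/(_ isT); rewrite -/M; lia.
have := has_p; rewrite has_find size_iota => lt_find.
split=> // [|x /andP[x_gt0 x_lt]].
  by have := nth_find 0 has_p; rewrite /p nth_iota // add1n.
have /(before_find 0) : x.-1 < find p (iota 1 M.+1) by lia.
by rewrite /p nth_iota ?add1n ?prednK //; [move/negbFE | lia].
Qed.

Lemma multiplicity_gt0 G : 0 < multiplicity G.
Proof. by case: (multiplicity_spec G). Qed.

Lemma multiplicity_eq G m :
  0 < m -> m \notin G -> (forall x, 0 < x < m -> x \in G) -> multiplicity G = m.
Proof.
move=> m_gt0 mG below_m; have [mu_gt0 muG below_mu] := multiplicity_spec G.
case: (ltngtP (multiplicity G) m) => // [lt_mu | lt_m].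
- by rewrite below_m ?mu_gt0 in muG.
- by rewrite below_mu ?m_gt0 in mG.
Qed.

Lemma eq_multiplicity G H : G =i H -> multiplicity G = multiplicity H.
Proof.
move=> eGH; have [mu_gt0 muH below_mu] := multiplicity_spec H.
by apply: multiplicity_eq => // [|x /below_mu]; rewrite eGH.
Qed.

Lemma conductor_leqP (G : seq nat) k : reflect {in G, forall x, x < k} (conductor G <= k).
Proof.
case: G => [|z G] /=; first by apply: ReflectT.
case: k => [|k]; first by apply: ReflectF => /(_ z (mem_head _ _)).
by rewrite ltnS; apply: (iffP (bigmax_leqP_seq _ _ _ _)) => bound x /bound; [exact | ].
Qed.

Lemma ceil_divn_leq c m q : 0 < m -> (c %/ m + (c %% m != 0) <= q) = (c <= q * m).
Proof. by move=> m_gt0; have := divn_eq c m; have := ltn_pmod c m_gt0; case: eqP; nia. Qed.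

Lemma depth_leqP (G : seq nat) q :
  reflect {in G, forall x, x < q * multiplicity G} (depth G <= q).
Proof. by rewrite /depth ceil_divn_leq ?multiplicity_gt0 //; apply: conductor_leqP. Qed.

Definition layers m (A B : seq nat) :=
  iota 1 m.-1 ++ map (addn m) A ++ map (addn (2 * m)) B.

Definition window (G : seq nat) lo n := [seq a <- iota 1 n | lo + a \in G].

Definition admissible (A B : seq nat) :=
  {subset B <= A} /\
  forall a b, 0 < a -> 0 < b -> a + b \in B -> a \in A \/ b \in A.

Lemma mem_map_addn k s x : (x \in map (addn k) s) = (k <= x) && (x - k \in s).
Proof.
apply/mapP/andP => [[y ys ->]|[le_kx xs]]; first by rewrite leq_addr addKn.
by exists (x - k); rewrite ?subnKC.
Qed.

Lemma mem_layers m A B x : (x \in layers m A B) =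
  [|| 0 < x < m, (m <= x) && (x - m \in A) | (2 * m <= x) && (x - 2 * m \in B)].
Proof. by rewrite !mem_cat !mem_map_addn mem_iota; congr orb; lia. Qed.

Lemma size_layers m A B : size (layers m A B) = m.-1 + size A + size B.
Proof. by rewrite !size_cat size_iota !size_map addnA. Qed.

Lemma eq_layers m A B A' B' : A =i A' -> B =i B' -> layers m A B =i layers m A' B'.
Proof. by move=> eA eB x; rewrite !mem_layers eA eB. Qed.

Lemma mem_window G lo n a : (a \in window G lo n) = (0 < a <= n) && (lo + a \in G).
Proof. by rewrite mem_filter mem_iota andbC; congr andb; lia. Qed.

Lemma window_bound G lo n k : n < k -> {in window G lo n, forall a, 0 < a < k}.
Proof. by move=> lt_nk a; rewrite mem_window; lia. Qed.

Lemma window_uniq G lo n : uniq (window G lo n).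
Proof. exact/filter_uniq/iota_uniq. Qed.

Lemma size_window G lo n : size (window G lo n) <= n.
Proof. by rewrite size_filter (leq_trans (count_size _ _)) ?size_iota. Qed.

Lemma eq_window G H lo n : G =i H -> window G lo n = window H lo n.
Proof. by move=> eGH; apply: eq_filter => a; rewrite eGH. Qed.

Section Layers.

Variables (m : nat) (A B : seq nat).
Hypotheses (A_bound : {in A, forall a, 0 < a < m}) (B_bound : {in B, forall b, 0 < b < m}).

Lemma mem_layers1 a : 0 < a < m -> (m + a \in layers m A B) = (a \in A).
Proof. by move=> a_bound; rewrite mem_layers addKn leq_addr; case: (a \in A); lia. Qed.

Lemma mem_layers2 b : 0 < b < m -> (2 * m + b \in layers m A B) = (b \in B).
Proof.
move=> b_bound; rewrite mem_layers addKn leq_addr.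
have -> : (2 * m + b - m \in A) = false by apply/negP => /A_bound; lia.
by case: (b \in B); lia.
Qed.

Lemma layers_uniq : uniq A -> uniq B -> uniq (layers m A B).
Proof.
move=> uA uB; rewrite cat_uniq iota_uniq cat_uniq !(map_inj_uniq (@addnI _)) uA uB /=.
apply/and3P; split=> //.
- apply/hasPn => x; rewrite mem_cat !mem_map_addn mem_iota.
  by case/orP=> /andP[le_x]; [move/A_bound | move/B_bound]; lia.
- apply/hasPn => x; rewrite !mem_map_addn => /andP[_ /B_bound bx].
  by apply/negP => /andP[_ /A_bound]; lia.
Qed.

Lemma multiplicity_layers : 0 < m -> multiplicity (layers m A B) = m.
Proof.
move=> m_gt0; apply: multiplicity_eq => // [|x x_bound]; last by rewrite mem_layers x_bound.
by rewrite mem_layers subnn; apply/or3P => -[|/andP[_ /A_bound]|/andP[]]; lia.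
Qed.

Lemma layers_bound : {in layers m A B, forall x, 0 < x < 3 * m}.
Proof.
by move=> x; rewrite mem_layers => /or3P[|/andP[_ /A_bound]|/andP[_ /B_bound]]; lia.
Qed.

Lemma depth_layers : depth (layers m A B) <= 3.
Proof.
apply/depth_leqP => x /[dup] /layers_bound x_bound.
by rewrite multiplicity_layers; lia.
Qed.

Lemma layers_gapset : uniq A -> uniq B -> admissible A B -> is_gapset (layers m A B).
Proof.
move=> uA uB [sBA split_B]; split; first exact: layers_uniq.
split=> [z /layers_bound | x y x_gt0 y_gt0]; first lia.
have [lt_xm | le_mx] := ltnP x m; first by left; rewrite mem_layers x_gt0 lt_xm.
have [lt_ym | le_my] := ltnP y m; first by right; rewrite mem_layers y_gt0 lt_ym.
have lift z : m <= z -> z - m \in A -> z \in layers m A B.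
  by move=> le_mz zA; rewrite mem_layers le_mz zA orbT.
rewrite mem_layers => /or3P[|/andP[_ /A_bound]|/andP[_]]; try lia.
have -> : x + y - 2 * m = (x - m) + (y - m) by lia.
have [-> | a_gt0] := posnP (x - m).
  by rewrite add0n => /sBA; right; apply: lift.
have [-> | b_gt0] := posnP (y - m).
  by rewrite addn0 => /sBA; left; apply: lift.
by case/split_B => // [xA | yA]; [left | right]; apply: lift.
Qed.

End Layers.

Lemma gapset_gt0 G : is_gapset G -> {in G, forall x, 0 < x}.
Proof. by case=> _ []. Qed.

Lemma gapset_notin_double G x : is_gapset G -> 0 < x -> x \notin G -> 2 * x \notin G.
Proof.
case=> _ [_ G_split] x_gt0 xG; rewrite mul2n -addnn.
by apply/negP => /(G_split _ _ x_gt0 x_gt0) []; apply/negP.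
Qed.

Lemma mem_gapset_sub_multiplicity G b :
  is_gapset G -> 2 * multiplicity G + b \in G -> multiplicity G + b \in G.
Proof.
case=> _ [_ G_split]; have [m_gt0 mG _] := multiplicity_spec G.
rewrite mulSn mul1n -addnA; case/G_split; rewrite ?addn_gt0 ?m_gt0 //.
by rewrite (negbTE mG).
Qed.

Lemma window_admissible G j : is_gapset G ->
  admissible (window G (multiplicity G) j) (window G (2 * multiplicity G) j).
Proof.
move=> G_gap; split=> [b | a b a_gt0 b_gt0]; rewrite !mem_window.
  by case/andP=> -> /(mem_gapset_sub_multiplicity G_gap).
case: G_gap => _ [_ G_split]; have m_gt0 := multiplicity_gt0 G.
case/andP=> ab_bound.
rewrite (_ : _ + (a + b) = (multiplicity G + a) + (multiplicity G + b)); last by lia.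
by case/G_split; rewrite ?addn_gt0 ?m_gt0 // => ->; [left | right]; lia.
Qed.

Section DepthThree.

Variable G : seq nat.
Hypotheses (G_gap : is_gapset G) (G_depth : depth G <= 3).
Local Notation m := (multiplicity G).

Lemma depth3_bound : {in G, forall x, 0 < x < 3 * m}.
Proof. by move=> x xG; rewrite (gapset_gt0 G_gap) //; apply: (depth_leqP _ _ G_depth). Qed.

Lemma layers_window : G =i layers m (window G m m.-1) (window G (2 * m) m.-1).
Proof.
have [m_gt0 mG below_m] := multiplicity_spec G.
have mm := gapset_notin_double G_gap m_gt0 mG.
(* Typing [x] as [nat] makes all membership atoms below syntactically equal for [lia]. *)
suff eq_mem (x : nat) :
    (x \in G) = (x \in layers m (window G m m.-1) (window G (2 * m) m.-1)).
  exact: eq_mem.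
have : x \in G -> 0 < x < 3 * m := @depth3_bound x.
rewrite mem_layers !mem_window.
have [lt_xm | le_mx] := ltnP x m.
  by have := below_m x; lia.
rewrite subnKC //; have [lt_x2m | le_2mx] := ltnP x (2 * m).
  rewrite (_ : _ + (x - _) = 2 * m); last by lia.
  by rewrite (negbTE mm); case: (eqVneq x m) => [-> | ]; rewrite ?(negbTE mG); lia.
by rewrite subnKC //; case: (eqVneq x (2 * m)) => [-> | ]; rewrite ?(negbTE mm); lia.
Qed.

Lemma size_depth3 :
  size G = m.-1 + size (window G m m.-1) + size (window G (2 * m) m.-1).
Proof.
have m_gt0 := multiplicity_gt0 G.
rewrite -size_layers; apply/perm_size/uniq_perm/layers_window; first by case: G_gap.
by apply: layers_uniq; rewrite ?window_uniq //; apply: window_bound; rewrite prednK.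
Qed.

Lemma multiplicity_gt1 : 0 < size G -> 1 < m.
Proof.
rewrite size_depth3; have := size_window G m m.-1.
by have := size_window G (2 * m) m.-1; lia.
Qed.

End DepthThree.

Definition grow (b1 b2 : bool) G :=
  let m := multiplicity G in
  layers m.+1 (window G m m.-1 ++ nseq b1 m) (window G (2 * m) m.-1 ++ nseq b2 m).

Definition shrink G :=
  let m := multiplicity G in layers m.-1 (window G m m.-2) (window G (2 * m) m.-2).

Lemma eq_grow b1 b2 G H : G =i H -> grow b1 b2 G = grow b1 b2 H.
Proof. by move=> eGH; rewrite /grow (eq_multiplicity eGH) !(eq_window _ _ eGH). Qed.

Lemma eq_shrink G H : G =i H -> shrink G = shrink H.
Proof. by move=> eGH; rewrite /shrink (eq_multiplicity eGH) !(eq_window _ _ eGH). Qed.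

Lemma cat_nseq_bound A k (b : bool) :
  0 < k -> {in A, forall a, 0 < a < k} -> {in A ++ nseq b k, forall a, 0 < a < k.+1}.
Proof.
move=> k_gt0 A_bound a; rewrite mem_cat mem_nseq.
by case/orP=> [/A_bound | /andP[_ /eqP ->]]; lia.
Qed.

Lemma cat_nseq_uniq A k (b : bool) :
  {in A, forall a, 0 < a < k} -> uniq A -> uniq (A ++ nseq b k).
Proof.
move=> A_bound uA; rewrite cat_uniq uA; case: b => //=.
by rewrite andbT orbF; apply/negP => /A_bound; lia.
Qed.

Lemma admissible_catl A A' B : admissible A B -> admissible (A ++ A') B.
Proof.
case=> sBA split_B; split=> [b /sBA | a b a_gt0 b_gt0 /(split_B _ _ a_gt0 b_gt0)[] xA].
- by rewrite mem_cat => ->.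
- by left; rewrite mem_cat xA.
- by right; rewrite mem_cat xA.
Qed.

Section Grow.

Variable G : seq nat.
Local Notation m := (multiplicity G).

Lemma grow_window_bound lo (b : bool) :
  {in window G lo m.-1 ++ nseq b m, forall a, 0 < a < m.+1}.
Proof.
have m_gt0 := multiplicity_gt0 G.
by apply: cat_nseq_bound => //; apply: window_bound; rewrite prednK.
Qed.

Lemma grow_window_uniq lo (b : bool) : uniq (window G lo m.-1 ++ nseq b m).
Proof.
have m_gt0 := multiplicity_gt0 G.
by apply: cat_nseq_uniq (window_uniq _ _ _); apply: window_bound; rewrite prednK.
Qed.

Variables b1 b2 : bool.

Lemma multiplicity_grow : multiplicity (grow b1 b2 G) = m.+1.
Proof. exact: multiplicity_layers _ (@grow_window_bound m b1) (ltn0Sn _). Qed.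

Lemma grow_uniq : uniq (grow b1 b2 G).
Proof.
apply: layers_uniq (@grow_window_bound m b1) (@grow_window_bound (2 * m) b2) _ _;
  exact: grow_window_uniq.
Qed.

Lemma depth_grow : depth (grow b1 b2 G) <= 3.
Proof. exact: depth_layers (@grow_window_bound m b1) (@grow_window_bound (2 * m) b2). Qed.

Lemma mem_grow_flag : (m.+1 + m \in grow b1 b2 G) = b1.
Proof.
have m_gt0 := multiplicity_gt0 G.
rewrite /grow mem_layers1; last lia.
by rewrite mem_cat mem_window mem_nseq eqxx andbT; case: b1; lia.
Qed.

End Grow.

Section Shrink.

Variable G : seq nat.
Hypothesis m_gt1 : 1 < multiplicity G.
Local Notation m := (multiplicity G).

Lemma shrink_window_bound lo : {in window G lo m.-2, forall a, 0 < a < m.-1}.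
Proof. by apply: window_bound; lia. Qed.

Lemma multiplicity_shrink : multiplicity (shrink G) = m.-1.
Proof. by rewrite /shrink multiplicity_layers //; apply: shrink_window_bound. Qed.

Lemma depth_shrink : depth (shrink G) <= 3.
Proof.
rewrite /shrink.
exact: depth_layers (@shrink_window_bound m) (@shrink_window_bound (2 * m)).
Qed.

Lemma shrink_gapset : is_gapset G -> is_gapset (shrink G).
Proof.
move=> G_gap; rewrite /shrink.
apply: layers_gapset (@shrink_window_bound m) (@shrink_window_bound (2 * m)) _ _ _;
  by [apply: window_uniq | apply: window_admissible].
Qed.

End Shrink.

Section GrowShrink.

Variable G : seq nat.
Hypotheses (G_gap : is_gapset G) (G_depth : depth G <= 3).
Local Notation m := (multiplicity G).

Lemma size_grow b1 b2 : size (grow b1 b2 G) = size G + 1 + b1 + b2.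
Proof.
rewrite (size_depth3 G_gap G_depth) /grow size_layers !size_cat !size_nseq.
by have := multiplicity_gt0 G; lia.
Qed.

Lemma grow_gapset b : is_gapset (grow b false G).
Proof.
apply: layers_gapset (@grow_window_bound G m b) (@grow_window_bound G (2 * m) false) _ _ _;
  rewrite ?grow_window_uniq //= cats0.
exact/admissible_catl/window_admissible.
Qed.

Lemma shrink_grow b1 b2 : shrink (grow b1 b2 G) =i G.
Proof.
have m_gt0 := multiplicity_gt0 G.
move=> x; rewrite [RHS](layers_window G_gap G_depth) /shrink multiplicity_grow succnK.
apply: eq_layers => a; rewrite !mem_window; case: (boolP (0 < a <= m.-1)) => // a_bound.
- rewrite /grow mem_layers1; last lia.
  by rewrite mem_cat mem_window mem_nseq; lia.
- rewrite /grow mem_layers2; [|exact: grow_window_bound | lia].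
  by rewrite mem_cat mem_window mem_nseq; lia.
Qed.

Lemma grow_shrink : 1 < m ->
  G =i grow (m + m.-1 \in G) (2 * m + m.-1 \in G) (shrink G).
Proof.
move=> m_gt1 x; rewrite {1}(layers_window G_gap G_depth) /grow multiplicity_shrink //.
rewrite prednK; last lia.
apply: eq_layers => a; rewrite !mem_cat !mem_window mem_nseq lt0b;
  have [-> | a_gt0] := posnP a; try lia;
  have [a_lt | a_ge] := ltnP a m.-1; try by case: (eqVneq a m.-1) => [-> | ]; lia.
- by rewrite /shrink mem_layers1 ?mem_window; lia.
- rewrite /shrink mem_layers2; [|exact: shrink_window_bound | lia].
  by rewrite mem_window; lia.
Qed.

End GrowShrink.

Lemma grow_inj b1 b2 b1' b2' G H :
    is_gapset G -> depth G <= 3 -> is_gapset H -> depth H <= 3 ->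
  grow b1 b2 G =i grow b1' b2' H -> b1 = b1' /\ G =i H.
Proof.
move=> G_gap G_depth H_gap H_depth eGH; split.
  have /succn_inj mGH : (multiplicity G).+1 = (multiplicity H).+1.
    by rewrite -(multiplicity_grow G b1 b2) -(multiplicity_grow H b1' b2') (eq_multiplicity eGH).
  by rewrite -(mem_grow_flag G b1 b2) eGH mGH mem_grow_flag.
move=> x; rewrite -(shrink_grow G_gap G_depth b1 b2) (eq_shrink eGH).
exact: shrink_grow.
Qed.

Lemma shrink_spec G : is_gapset G -> depth G <= 3 -> 1 < multiplicity G ->
  exists c1 c2 : bool, [/\ c2 ==> c1, G =i grow c1 c2 (shrink G) &
                          size G = size (shrink G) + 1 + c1 + c2].
Proof.
move=> G_gap G_depth m_gt1; have eG := grow_shrink G_gap G_depth m_gt1.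
exists (multiplicity G + (multiplicity G).-1 \in G).
exists (2 * multiplicity G + (multiplicity G).-1 \in G); split=> //.
  by apply/implyP => /(mem_gapset_sub_multiplicity G_gap).
rewrite -(size_grow (shrink_gapset m_gt1 G_gap) (depth_shrink m_gt1)).
by apply/perm_size/uniq_perm/eG; [case: G_gap | apply: grow_uniq].
Qed.

Definition depth3_gapset g G := is_gapset G /\ genus G = g /\ depth G <= 3.

Definition enumerates (P : seq nat -> Prop) (s : seq (seq nat)) :=
  (forall G, G \in s -> P G) /\
  (forall G, P G -> exists2 H, H \in s & perm_eq G H) /\
  (forall i j, i < size s -> j < size s ->
     perm_eq (nth [::] s i) (nth [::] s j) -> i = j).

Lemma perm_sort_leqP (G H : seq nat) : reflect (sort leq G = sort leq H) (perm_eq G H).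
Proof. exact: (perm_sortP leq_total leq_trans anti_leq G H). Qed.

Lemma enumeratesP P s : enumerates P s <->
  [/\ forall G, G \in s -> P G, forall G, P G -> exists2 H, H \in s & perm_eq G H
    & uniq (map (sort leq) s)].
Proof.
have distinctP : (forall i j, i < size s -> j < size s ->
    perm_eq (nth [::] s i) (nth [::] s j) -> i = j) <-> uniq (map (sort leq) s).
  split=> [s_inj | s_uniq i j lt_i lt_j /perm_sort_leqP].
    apply/(uniqP [::]) => i j; rewrite !inE size_map => lt_i lt_j.
    by rewrite !(nth_map [::]) // => /perm_sort_leqP; apply: s_inj.
  by rewrite -!(nth_map [::] [::]) //; apply: (uniqP [::] s_uniq); rewrite inE size_map.
by split=> [[sP [s_all /distinctP]] | [sP s_all /distinctP]].
Qed.

Lemma enumerates_cat P Q s t : enumerates P s -> enumerates Q t ->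
    (forall G H, P G -> Q H -> ~ perm_eq G H) ->
  enumerates (fun G => P G \/ Q G) (s ++ t).
Proof.
move=> /enumeratesP[sP s_all s_uniq] /enumeratesP[tQ t_all t_uniq] PQ_disjoint.
apply/enumeratesP; split=> [G | G | ].
- by rewrite mem_cat => /orP[/sP | /tQ]; [left | right].
- by case=> [/s_all | /t_all] [H H_in GH]; exists H; rewrite // mem_cat H_in ?orbT.
- rewrite map_cat cat_uniq s_uniq t_uniq andbT /=.
  apply/hasPn => _ /mapP[H Ht ->]; apply/mapP => -[G Gs /esym/perm_sort_leqP].
  exact: PQ_disjoint (sP _ Gs) (tQ _ Ht).
Qed.

Lemma enumerates_leq_size P Q s t (f : seq nat -> seq nat) :
    enumerates P s -> enumerates Q t -> (forall G, P G -> Q (f G)) ->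
    (forall G H, P G -> P H -> perm_eq (f G) (f H) -> perm_eq G H) ->
  size s <= size t.
Proof.
move=> [sP [_ s_inj]] /enumeratesP[_ t_all _] PQ f_inj.
rewrite -(size_map (sort leq \o f) s) -(size_map (sort leq) t); apply: uniq_leq_size.
  apply/(uniqP [::]) => i j; rewrite !inE size_map => lt_i lt_j.
  rewrite !(nth_map [::]) // => /perm_sort_leqP /f_inj fij.
  by apply: s_inj => //; apply: fij; apply/sP/mem_nth.
move=> _ /mapP[G Gs ->]; have [H Ht fGH] := t_all _ (PQ _ (sP _ Gs)).
by apply/mapP; exists H => //; apply/perm_sort_leqP.
Qed.

Fixpoint subseqs T (l : seq T) : seq (seq T) :=
  if l is x :: l' then [seq x :: s | s <- subseqs l'] ++ subseqs l' else [:: [::]].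

Lemma mem_subseqs (T : eqType) (l s : seq T) : (s \in subseqs l) = subseq s l.
Proof.
elim: l s => [|x l IHl] [|y s] //=; rewrite mem_cat IHl ?sub0seq ?orbT //.
have [<- | neq_yx] := eqVneq y x.
  have cons_inj : injective (cons y) by move=> ? ? [].
  rewrite (mem_map cons_inj) IHl.
  by rewrite orb_idr // => /(subseq_trans (subseq_cons s y)).
by rewrite orb_idl // => /mapP[t _ [eq_yx _]]; rewrite eq_yx eqxx in neq_yx.
Qed.

Lemma exists_filter (T : eqType) (P : T -> Prop) (l : seq T) :
  exists2 s, subseq s l & forall x, x \in s <-> x \in l /\ P x.
Proof.
elim: l => [|y l [s sub_sl s_mem]]; first by exists [::] => // x; split=> [|[]].
have [Py | nPy] := classic (P y).
  exists (y :: s) => [|x]; first by rewrite /= eqxx.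
  rewrite !inE; split=> [/predU1P[-> | /s_mem[-> Px]] | [/predU1P[-> | xl] Px]].
  - by rewrite eqxx.
  - by rewrite orbT.
  - by rewrite eqxx.
  - by apply/predU1P; right; apply/s_mem.
exists s => [|x]; first exact: subseq_trans sub_sl (subseq_cons l y).
rewrite inE; split=> [/s_mem[-> Px] | [/predU1P[-> // | xl] Px]]; first by rewrite orbT.
exact/s_mem.
Qed.

Lemma depth3_gapsetW g G : depth3_gapset g G -> is_gapset G /\ depth G <= 3.
Proof. by case=> ? []. Qed.

Lemma depth3_gapset_perm g G H : depth3_gapset g G -> perm_eq G H -> depth3_gapset g H.
Proof.
move=> [[G_uniq [G_pos G_split]] [G_genus /depth_leqP G_bound]] GH.
have eGH := perm_mem GH; do !split.
- by rewrite -(perm_uniq GH).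
- by move=> z; rewrite -eGH; apply: G_pos.
- by move=> x y x_gt0 y_gt0; rewrite -!eGH; apply: G_split.
- by rewrite /genus -(perm_size GH).
- by apply/depth_leqP => x; rewrite -(eq_multiplicity eGH) -eGH; apply: G_bound.
Qed.

Lemma depth3_gapset_genus_perm g g' G H :
  depth3_gapset g G -> depth3_gapset g' H -> perm_eq G H -> g = g'.
Proof. by move=> [_ [<- _]] [_ [<- _]] /perm_size. Qed.

Lemma depth3_gapset_bound g G : depth3_gapset g G -> {in G, forall x, 0 < x < 3 * g.+1}.
Proof.
case=> G_gap [<- G_depth] x /(depth3_bound G_gap G_depth).
by have := size_depth3 G_gap G_depth; rewrite /genus; lia.
Qed.

Lemma exists_enumeration g : exists s, enumerates (depth3_gapset g) s.
Proof.
set N := 3 * g.+1.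
have [s s_sub s_mem] := exists_filter (depth3_gapset g) (undup (subseqs (iota 1 N))).
have s_sorted H : H \in s -> sorted ltn H.
  case/s_mem; rewrite mem_undup mem_subseqs => /subseq_sorted-> //.
  - exact: ltn_trans.
  - exact: iota_ltn_sorted.
exists s; apply/enumeratesP; split=> [G /s_mem[] // | G PG | ].
- set H := [seq x <- iota 1 N | x \in G].
  have G_perm : perm_eq G H.
    apply: uniq_perm; [by case: PG => -[] | exact/filter_uniq/iota_uniq | move=> x].
    rewrite mem_filter mem_iota andbC.
    case: (boolP (x \in G)) => xG; rewrite ?andbF // andbT.
    by have := depth3_gapset_bound PG xG; lia.
  exists H => //; apply/s_mem.
  by rewrite mem_undup mem_subseqs filter_subseq; split=> //; apply: depth3_gapset_perm G_perm.
- rewrite (_ : map _ s = s); first exact: subseq_uniq s_sub (undup_uniq _).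
  rewrite -[RHS]map_id; apply/eq_in_map => H /s_sorted H_sorted.
  exact/(sorted_sort leq_trans)/(sub_sorted ltnW).
Qed.

Lemma grow_depth3_gapset g g' (b : bool) G :
  depth3_gapset g G -> g' = g + 1 + b -> depth3_gapset g' (grow b false G).
Proof.
case=> G_gap [<- G_depth] ->; rewrite /depth3_gapset /genus size_grow // addn0.
by split; [apply: grow_gapset | split; last apply: depth_grow].
Qed.

Lemma shrink_depth3_gapset g G : 0 < g -> depth3_gapset g G ->
  depth3_gapset g.-1 (shrink G) \/ depth3_gapset g.-2 (shrink G) \/
  depth3_gapset (g - 3) (shrink G).
Proof.
move=> g_gt0 [G_gap [G_genus G_depth]]; rewrite /genus in G_genus.
have m_gt1 : 1 < multiplicity G by apply: (multiplicity_gt1 G_gap G_depth); rewrite G_genus.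
have [c1 [c2 [c21 _ sizeG]]] := shrink_spec G_gap G_depth m_gt1.
have shrink_gap := shrink_gapset m_gt1 G_gap; have shrink_depth := depth_shrink m_gt1.
rewrite /depth3_gapset /genus; move: c21 sizeG.
by case: c1; case: c2 => //= _ sizeG; [right; right | right; left | left]; do !split=> //; lia.
Qed.

Lemma shrink_perm_inj g G H : 0 < g -> depth3_gapset g G -> depth3_gapset g H ->
  perm_eq (shrink G) (shrink H) -> perm_eq G H.
Proof.
rewrite /depth3_gapset /genus => g_gt0 [G_gap [G_genus G_depth]] [H_gap [H_genus H_depth]] GH.
have mG_gt1 : 1 < multiplicity G by apply: (multiplicity_gt1 G_gap G_depth); rewrite G_genus.
have mH_gt1 : 1 < multiplicity H by apply: (multiplicity_gt1 H_gap H_depth); rewrite H_genus.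
have [cG1 [cG2 [cG21 eG sizeG]]] := shrink_spec G_gap G_depth mG_gt1.
have [cH1 [cH2 [cH21 eH sizeH]]] := shrink_spec H_gap H_depth mH_gt1.
(* The genus fixes c1 + c2, hence the flags since c2 implies c1. *)
have [ec1 ec2] : cG1 = cH1 /\ cG2 = cH2.
  move: sizeG sizeH cG21 cH21; rewrite G_genus H_genus (perm_size GH).
  by clear eG eH; case: cG1 cG2 cH1 cH2 => [] [] [] [] //=; lia.
apply: uniq_perm; [by case: G_gap | by case: H_gap | move=> x].
by rewrite eG ec1 ec2 (eq_grow _ _ (perm_mem GH)) -eH.
Qed.

Lemma enumerates_depth3_lower g s0 s1 s2 : 1 < g ->
    enumerates (depth3_gapset g) s0 -> enumerates (depth3_gapset g.-1) s1 ->
    enumerates (depth3_gapset g.-2) s2 ->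
  size s1 + size s2 <= size s0.
Proof.
move=> g_gt1 e0 e1 e2; rewrite -size_cat.
pose f G := grow (size G == g.-2) false G.
apply: (enumerates_leq_size (enumerates_cat e1 e2 _) e0 (f := f)).
- by move=> G H PG PH /(depth3_gapset_genus_perm PG PH); lia.
- move=> G [] /[dup] PG [_ [G_genus _]]; apply: grow_depth3_gapset PG _;
    by rewrite /genus in G_genus; lia.
- move=> G H PG PH /perm_mem.
  have [G_gap G_depth] : is_gapset G /\ depth G <= 3 by case: PG => /depth3_gapsetW.
  have [H_gap H_depth] : is_gapset H /\ depth H <= 3 by case: PH => /depth3_gapsetW.
  case/(grow_inj G_gap G_depth H_gap H_depth) => _.
  by apply: uniq_perm; [case: G_gap | case: H_gap].
Qed.

Lemma enumerates_depth3_upper g s0 s1 s2 s3 : 2 < g ->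
    enumerates (depth3_gapset g) s0 -> enumerates (depth3_gapset g.-1) s1 ->
    enumerates (depth3_gapset g.-2) s2 -> enumerates (depth3_gapset (g - 3)) s3 ->
  size s0 <= size s1 + size s2 + size s3.
Proof.
move=> g_gt2 e0 e1 e2 e3; rewrite -addnA -!size_cat.
apply: (enumerates_leq_size e0 (enumerates_cat e1 (enumerates_cat e2 e3 _) _) (f := shrink)).
- by move=> G H PG PH /(depth3_gapset_genus_perm PG PH); lia.
- by move=> G H PG [] PH /(depth3_gapset_genus_perm PG PH); lia.
- by move=> G; apply: shrink_depth3_gapset; lia.
- by move=> G H; apply: shrink_perm_inj; lia.
Qed.

Lemma enumerates_depth3E g s : enumerates_depth3 g s <-> enumerates (depth3_gapset g) s.
Proof.
split=> [[sP [s_all s_inj]] | [sP [s_all s_inj]]]; do !split=> //.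
- by move=> G [G_gap [G_genus G_depth]]; apply: s_all.
- by move=> G G_gap G_genus G_depth; apply: s_all.
Qed.

Theorem mainTheorem1 :
  (forall g : nat, exists s : seq (seq nat), enumerates_depth3 g s) /\
  (forall (g : nat) (s0 s1 s2 s3 : seq (seq nat)), 3 <= g ->
     enumerates_depth3 g s0 -> enumerates_depth3 g.-1 s1 ->
     enumerates_depth3 g.-2 s2 -> enumerates_depth3 (g - 3) s3 ->
     size s1 + size s2 <= size s0 /\
     size s0 <= size s1 + size s2 + size s3).
Proof.
split=> [g | g s0 s1 s2 s3 g_ge3].
  by have [s e] := exists_enumeration g; exists s; apply/enumerates_depth3E.
rewrite !enumerates_depth3E => e0 e1 e2 e3.
split; first exact: enumerates_depth3_lower (ltnW g_ge3) e0 e1 e2.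
exact: enumerates_depth3_upper g_ge3 e0 e1 e2 e3.
Qed.
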